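(* Let $P\ge4$ be even and $\gamma>0$. For each $\beta'>0$ let $(\bar m,\bar q,\bar p)=(\bar m(\beta'),\bar q(\beta'),\bar p(\beta'))$ be a solution of $$\bar m=\mathbb E_x\tanh\Big[\tfrac P2\beta'\bar m^{P-1}+x\sqrt{\beta'\gamma\tfrac P2\bar p\,\bar q^{P/2-1}}\Big],\quad \bar q=\mathbb E_x\tanh^2\Big[\tfrac P2\beta'\bar m^{P-1}+x\sqrt{\beta'\gamma\tfrac P2\bar p\,\bar q^{P/2-1}}\Big],\quad \bar p=\beta'\bar q^{P/2},$$ where $x$ is a standard Gaussian. Assume that, as $\beta'\to\infty$, $\bar m(\beta')\to m_\infty$ and $\beta'(1-\bar q(\beta'))$ converges to a finite limit. Then $$m_\infty=\mathrm{erf}\Big[\tfrac12\sqrt{\tfrac P\gamma}\,m_\infty^{P-1}\Big].$$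
   Context: These are the replica-symmetric self-consistency equations of the dense Hebbian network (with $\beta'=2\beta/P!$ the rescaled inverse temperature and $\gamma$ the storage load); $\mathrm{erf}$ is the error function. *)

From Stdlib Require Export Reals.
From Coquelicot Require Export Coquelicot.
Open Scope R_scope.

Definition gauss_E (f : R -> R) : R :=
  RInt_gen (fun x => f x * exp (- x ^ 2 / 2) / sqrt (2 * PI))
           (Rbar_locally m_infty) (Rbar_locally p_infty).

Definition erf (z : R) : R := 2 / sqrt PI * RInt (fun t => exp (- t ^ 2)) 0 z.

(* The argument of tanh in the self-consistency equations. *)
Definition rs_field (P : nat) (gamma b m q p x : R) : R :=
  INR P / 2 * b * m ^ (P - 1)
  + x * sqrt (b * gamma * (INR P / 2) * p * q ^ (P / 2 - 1)).

From Stdlib Require Import Lra Lia FunctionalExtensionality.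
Open Scope R_scope.

(* Substituting p = b q^(P/2), the field of the magnetization equation is
   k (x - s) with slope k = b C(q), C(q) = sqrt(gamma (P/2) q^(P-1)), and threshold
   s = -(P/2) m^(P-1) / C(q).  Boundedness of b (1 - q) forces q -> 1, hence
   k -> +oo and s -> t := -(P/2) m_inf^(P-1) / sqrt(gamma P / 2).  Away from a
   shrinking window around t, tanh (k (x - s)) is uniformly close to sign (x - t),
   and the Gaussian tails (dominated by e^(1/2 - |x|)) make the truncation of the
   expectation to [-M, M] uniform, so E_x tanh (k (x - s)) tends to
   Pr(x > t) - Pr(x < t) = \int_t^(-t) phi = erf (-t / sqrt 2). *)

Lemma exp_le_compat (x y : R) : x <= y -> exp x <= exp y.
Proof.
  intros [Hlt | ->]; [left; apply exp_increasing, Hlt | right; reflexivity].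
Qed.

Lemma ex_RInt_of_continuous (f : R -> R) (a b : R) :
  (forall x, continuous f x) -> ex_RInt f a b.
Proof. intros Hf; apply (ex_RInt_continuous (V := R_CompleteNormedModule)); auto. Qed.

Lemma abs_RInt_swap (f : R -> R) (a b : R) :
  ex_RInt f a b -> Rabs (RInt f b a) = Rabs (RInt f a b).
Proof.
  intros Hf; rewrite <- (opp_RInt_swap (V := R_CompleteNormedModule) f a b Hf).
  apply Rabs_Ropp.
Qed.

Lemma abs_RInt_le_antiderivative (f g G : R -> R) (a b : R) :
  a <= b -> ex_RInt f a b ->
  (forall x, a <= x <= b -> Rabs (f x) <= g x) ->
  (forall x, a <= x <= b -> is_derive G x (g x)) ->
  (forall x, a <= x <= b -> continuous g x) ->
  Rabs (RInt f a b) <= G b - G a.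
Proof.
  intros Hab Hf Hfg HG Hg.
  apply (norm_RInt_le (V := R_NormedModule) f g a b _ _ Hab Hfg).
  - apply (RInt_correct (V := R_CompleteNormedModule)), Hf.
  - apply (is_RInt_derive (V := R_CompleteNormedModule));
      rewrite Rmin_left, Rmax_right by exact Hab; assumption.
Qed.

Lemma abs_RInt_le_two_pieces (f : R -> R) (a m b e1 e2 : R) :
  a <= m <= b -> (forall x, continuous f x) ->
  (forall x, a <= x <= m -> Rabs (f x) <= e1) ->
  (forall x, m <= x <= b -> Rabs (f x) <= e2) ->
  Rabs (RInt f a b) <= (m - a) * e1 + (b - m) * e2.
Proof.
  intros [Ham Hmb] Hf H1 H2.
  rewrite <- (RInt_Chasles (V := R_CompleteNormedModule) f a m b)
    by apply ex_RInt_of_continuous, Hf.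
  eapply Rle_trans; [apply Rabs_triang |].
  apply Rplus_le_compat; apply abs_RInt_le_const; auto; apply ex_RInt_of_continuous, Hf.
Qed.

Lemma continuous_comp_opp (f : R -> R) (x : R) :
  (forall x, continuous f x) -> continuous (fun x => f (- x)) x.
Proof.
  intros Hf; apply (continuous_comp (fun x => - x) f); [| apply Hf].
  apply (continuous_opp (V := R_NormedModule) (fun x => x)), continuous_id.
Qed.

Lemma RInt_reflect (f : R -> R) (a b : R) :
  (forall x, continuous f x) -> RInt f a b = RInt (fun x => f (- x)) (- b) (- a).
Proof.
  intros Hf.
  assert (Hf' : forall x, continuous (fun x => f (- x)) x)
    by (intros; apply continuous_comp_opp, Hf).
  rewrite <- (opp_RInt_swap (V := R_CompleteNormedModule) _ (- a) (- b))
    by apply ex_RInt_of_continuous, Hf'.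
  pose proof (RInt_comp_lin (V := R_CompleteNormedModule) (fun x => f (- x)) (-1) 0 a b
                (ex_RInt_of_continuous _ _ _ Hf')) as Hlin.
  replace (-1 * a + 0) with (- a) in Hlin by ring.
  replace (-1 * b + 0) with (- b) in Hlin by ring.
  rewrite <- Hlin.
  rewrite (RInt_ext (V := R_CompleteNormedModule) (fun y => scal (-1) (f (- (-1 * y + 0))))
             (fun y => opp (f y))).
  - rewrite (RInt_opp (V := R_CompleteNormedModule)) by apply ex_RInt_of_continuous, Hf.
    symmetry; apply opp_opp.
  - intros y _; unfold scal, opp; simpl; unfold mult; simpl.
    replace (- (-1 * y + 0)) with y by ring; ring.
Qed.

Lemma abs_RInt_le_exp_tail (h : R -> R) (c M u v : R) :
  0 <= c -> (forall x, continuous h x) ->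
  (forall x, M <= x -> Rabs (h x) <= c * exp (- x)) ->
  M <= u -> M <= v -> Rabs (RInt h u v) <= c * exp (- M).
Proof.
  intros Hc Hh Hbound.
  assert (ordered : forall u v, M <= u <= v -> Rabs (RInt h u v) <= c * exp (- M)).
  { intros a b [Ha Hab].
    eapply Rle_trans.
    - apply (abs_RInt_le_antiderivative h (fun x => c * exp (- x))
               (fun x => - (c * exp (- x)))); auto.
      + apply ex_RInt_of_continuous, Hh.
      + intros x Hx; apply Hbound; lra.
      + intros x _; auto_derive; [exact I | ring].
      + intros x _; apply (ex_derive_continuous (fun x => c * exp (- x))); auto_derive; exact I.
    - pose proof (exp_pos (- b)).
      assert (exp (- a) <= exp (- M)) by (apply exp_le_compat; lra).
      nra. }
  intros Hu Hv; destruct (Rle_dec u v).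
  - apply ordered; lra.
  - rewrite <- abs_RInt_swap by apply ex_RInt_of_continuous, Hh; apply ordered; lra.
Qed.

Section ExponentialTails.

Variables (h : R -> R) (c : R).
Hypothesis h_cont : forall x, continuous h x.
Hypothesis h_bound : forall x, Rabs (h x) <= c * exp (- Rabs x).

Let ex_RInt_h (a b : R) : ex_RInt h a b := ex_RInt_of_continuous h a b h_cont.

Lemma exp_tail_const_nonneg : 0 <= c.
Proof.
  pose proof (Rle_trans _ _ _ (Rabs_pos (h 0)) (h_bound 0)) as H.
  rewrite Rabs_R0, Ropp_0, exp_0, Rmult_1_r in H; exact H.
Qed.

Lemma exp_tail_bound_one_sided (x : R) :
  Rabs (h x) <= c * exp (- x) /\ Rabs (h (- x)) <= c * exp (- x).
Proof.
  pose proof exp_tail_const_nonneg.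
  pose proof (Rle_abs x).
  split; (eapply Rle_trans; [apply h_bound |]);
    apply Rmult_le_compat_l; auto; apply exp_le_compat; rewrite ?Rabs_Ropp; lra.
Qed.

Lemma abs_RInt_truncation_diff (a b a' b' M : R) :
  a <= - M -> a' <= - M -> M <= b -> M <= b' ->
  Rabs (RInt h a b - RInt h a' b') <= 2 * (c * exp (- M)).
Proof.
  intros Ha Ha' Hb Hb'.
  assert (Hsplit : RInt h a b = RInt h a a' + RInt h a' b' + RInt h b' b).
  { rewrite <- (RInt_Chasles (V := R_CompleteNormedModule) h a a' b) by apply ex_RInt_h.
    rewrite <- (RInt_Chasles (V := R_CompleteNormedModule) h a' b' b) by apply ex_RInt_h.
    unfold plus; simpl; ring. }
  rewrite Hsplit.
  replace (RInt h a a' + RInt h a' b' + RInt h b' b - RInt h a' b')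
    with (RInt h a a' + RInt h b' b) by ring.
  eapply Rle_trans; [apply Rabs_triang |].
  pose proof exp_tail_const_nonneg.
  assert (Hleft : Rabs (RInt h a a') <= c * exp (- M)).
  { rewrite RInt_reflect by exact h_cont.
    apply abs_RInt_le_exp_tail; try lra.
    - intros; apply continuous_comp_opp, h_cont.
    - intros x _; apply exp_tail_bound_one_sided. }
  assert (Hright : Rabs (RInt h b' b) <= c * exp (- M)).
  { apply abs_RInt_le_exp_tail; auto; intros x _; apply exp_tail_bound_one_sided. }
  lra.
Qed.

Let far (M : R) (ab : R * R) : Prop := fst ab <= - M /\ M <= snd ab.

Let far_eventually (M : R) :
  filter_prod (Rbar_locally m_infty) (Rbar_locally p_infty) (far M).
Proof.
  apply (Filter_prod _ _ _ (fun a => a <= - M) (fun b => M <= b)).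
  - exists (- M); intros; lra.
  - exists M; intros; lra.
  - intros a b Ha Hb; split; assumption.
Qed.

Lemma is_RInt_gen_exp_tails :
  exists y, is_RInt_gen h (Rbar_locally m_infty) (Rbar_locally p_infty) y /\
    forall M, Rabs (y - RInt h (- M) M) <= 2 * (c * exp (- M)).
Proof.
  pose (F := filter_prod (Rbar_locally m_infty) (Rbar_locally p_infty)).
  assert (HF : ProperFilter F) by (apply filter_prod_proper; apply Rbar_locally_filter).
  destruct (proj1 (Hierarchy.filterlim_locally_cauchy (U := R_CompleteSpace) (F := F)
                     (fun ab => RInt h (fst ab) (snd ab)))) as [y Hy].
  { intros eps; pose proof (cond_pos eps) as Heps; pose proof exp_tail_const_nonneg.
    pose (M := - ln (eps / (4 * (c + 1)))).
    exists (far M); split; [apply far_eventually |].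
    intros [a b] [a' b'] [Ha Hb] [Ha' Hb']; simpl in *.
    change (Rabs (RInt h a' b' - RInt h a b) < eps).
    eapply Rle_lt_trans; [apply (abs_RInt_truncation_diff _ _ _ _ M); assumption |].
    unfold M; rewrite Ropp_involutive, exp_ln by (apply Rdiv_lt_0_compat; lra).
    apply (Rmult_lt_reg_r (4 * (c + 1))); [lra |].
    field_simplify; [nra | lra]. }
  exists y; split.
  - intros P HP; specialize (Hy P HP); unfold filtermap in Hy; unfold filtermapi.
    eapply filter_imp; [| exact Hy]; intros [a b] Hab.
    exists (RInt h a b); split; [| exact Hab].
    apply (RInt_correct (V := R_CompleteNormedModule)), ex_RInt_h.
  - intros M; apply Rle_plus_epsilon; intros eps Heps.
    assert (Hclose : F (fun ab => Rabs (RInt h (fst ab) (snd ab) - y) < eps)).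
    { apply (Hy (fun z => Rabs (z - y) < eps)).
      exists (mkposreal eps Heps); intros z Hz; exact Hz. }
    destruct (filter_ex _ (filter_and _ _ Hclose (far_eventually M)))
      as [[a b] [Hab [Ha Hb]]]; simpl in *.
    pose proof (abs_RInt_truncation_diff a b (- M) M M Ha ltac:(lra) Hb ltac:(lra)).
    replace (y - RInt h (- M) M) with ((RInt h a b - RInt h (- M) M) - (RInt h a b - y)) by ring.
    eapply Rle_trans; [apply Rabs_triang |]; rewrite Rabs_Ropp; lra.
Qed.

End ExponentialTails.

Lemma RInt_even_reflect (w : R -> R) (a b : R) :
  (forall x, continuous w x) -> (forall x, w (- x) = w x) ->
  RInt w a b = RInt w (- b) (- a).
Proof.
  intros Hw Heven; rewrite RInt_reflect by exact Hw.
  apply (RInt_ext (V := R_CompleteNormedModule)); intros; apply Heven.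
Qed.

Lemma RInt_even_sign_split (w : R -> R) (t M : R) :
  (forall x, continuous w x) -> (forall x, w (- x) = w x) ->
  RInt w t M - RInt w (- M) t = RInt w t (- t).
Proof.
  intros Hw Heven.
  rewrite (RInt_even_reflect w (- M) t Hw Heven), Ropp_involutive.
  rewrite <- (RInt_Chasles (V := R_CompleteNormedModule) w t (- t) M)
    by apply ex_RInt_of_continuous, Hw.
  unfold plus; simpl; ring.
Qed.

Lemma RInt_even_symmetric (w : R -> R) (s : R) :
  (forall x, continuous w x) -> (forall x, w (- x) = w x) ->
  RInt w s (- s) = 2 * RInt w 0 (- s).
Proof.
  intros Hw Heven.
  rewrite <- (RInt_Chasles (V := R_CompleteNormedModule) w s 0 (- s))
    by apply ex_RInt_of_continuous, Hw.
  rewrite (RInt_even_reflect w s 0 Hw Heven), Ropp_0.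
  unfold plus; simpl; ring.
Qed.

Lemma abs_RInt_weighted_sign_approx (g w : R -> R) (t d e M : R) :
  (forall x, continuous g x) -> (forall x, continuous w x) ->
  (forall x, Rabs (g x) <= 1) -> (forall x, 0 <= w x <= 1) ->
  0 < d -> 0 <= e -> - M <= t - d -> t + d <= M ->
  (forall x, - M <= x <= t - d -> Rabs (g x + 1) <= e) ->
  (forall x, t + d <= x <= M -> Rabs (g x - 1) <= e) ->
  Rabs (RInt (fun x => g x * w x) (- M) M - (RInt w t M - RInt w (- M) t))
    <= 4 * d + 2 * M * e.
Proof.
  intros Hg Hw Hg1 Hw01 Hd He HM1 HM2 Hleft Hright.
  assert (Hgw : forall x, continuous (fun x => g x * w x) x).
  { intros x; apply (continuous_mult (K := R_AbsRing) g w); auto. }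
  assert (Hplus : forall x, continuous (fun x => g x * w x + w x) x).
  { intros x; apply (continuous_plus (V := R_NormedModule) _ w); auto. }
  assert (Hminus : forall x, continuous (fun x => g x * w x - w x) x).
  { intros x; apply (continuous_minus (V := R_NormedModule) _ w); auto. }
  assert (weight_le : forall a x, Rabs (a * w x) <= Rabs a).
  { intros a x; specialize (Hw01 x); rewrite Rabs_mult, (Rabs_pos_eq (w x)) by lra.
    pose proof (Rabs_pos a); nra. }
  assert (sign_le_2 : forall s x, Rabs (g x + s) <= 1 + Rabs s).
  { intros s x; eapply Rle_trans; [apply Rabs_triang |]; specialize (Hg1 x); lra. }
  assert (Hsplit :
    RInt (fun x => g x * w x) (- M) M - (RInt w t M - RInt w (- M) t)
    = RInt (fun x => g x * w x + w x) (- M) t + RInt (fun x => g x * w x - w x) t M).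
  { rewrite <- (RInt_Chasles (V := R_CompleteNormedModule) _ (- M) t M)
      by apply ex_RInt_of_continuous, Hgw.
    rewrite (RInt_plus (V := R_CompleteNormedModule)), (RInt_minus (V := R_CompleteNormedModule))
      by (apply ex_RInt_of_continuous; auto).
    unfold minus, plus, opp; simpl; ring. }
  rewrite Hsplit; eapply Rle_trans; [apply Rabs_triang |].
  assert (Hneg : Rabs (RInt (fun x => g x * w x + w x) (- M) t)
                 <= (t - d - - M) * e + (t - (t - d)) * 2).
  { apply abs_RInt_le_two_pieces; auto; [lra | |]; intros x Hx;
      replace (g x * w x + w x) with ((g x + 1) * w x) by ring;
      eapply Rle_trans; try apply weight_le.
    - apply Hleft; lra.
    - eapply Rle_trans; [apply sign_le_2 |]; rewrite Rabs_R1; lra. }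
  assert (Hpos : Rabs (RInt (fun x => g x * w x - w x) t M)
                 <= (t + d - t) * 2 + (M - (t + d)) * e).
  { apply abs_RInt_le_two_pieces; auto; [lra | |]; intros x Hx;
      replace (g x * w x - w x) with ((g x + -1) * w x) by ring;
      eapply Rle_trans; try apply weight_le.
    - eapply Rle_trans; [apply sign_le_2 |]; rewrite Rabs_left; lra.
    - apply Hright; lra. }
  nra.
Qed.

Definition gauss_pdf (x : R) : R := exp (- x ^ 2 / 2) / sqrt (2 * PI).

Lemma sqrt_2PI_ge_1 : 1 <= sqrt (2 * PI).
Proof. rewrite <- sqrt_1; apply sqrt_le_1_alt; pose proof PI2_1; lra. Qed.

Lemma continuous_gauss_pdf (x : R) : continuous gauss_pdf x.
Proof.
  apply (ex_derive_continuous gauss_pdf); unfold gauss_pdf; auto_derive.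
  pose proof sqrt_2PI_ge_1; lra.
Qed.

Lemma gauss_pdf_even (x : R) : gauss_pdf (- x) = gauss_pdf x.
Proof. unfold gauss_pdf; do 3 f_equal; ring. Qed.

Lemma gauss_pdf_bounds (x : R) : 0 <= gauss_pdf x <= exp (- x ^ 2 / 2).
Proof.
  unfold gauss_pdf; pose proof sqrt_2PI_ge_1; pose proof (exp_pos (- x ^ 2 / 2)).
  split; [apply Rdiv_le_0_compat; lra |].
  unfold Rdiv; rewrite <- (Rmult_1_r (exp _)) at 2.
  apply Rmult_le_compat_l; [lra |].
  rewrite <- Rinv_1; apply Rinv_le_contravar; lra.
Qed.

Lemma gauss_pdf_weight (x : R) : 0 <= gauss_pdf x <= 1.
Proof.
  pose proof (gauss_pdf_bounds x).
  assert (exp (- x ^ 2 / 2) <= 1)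
    by (rewrite <- exp_0; apply exp_le_compat; pose proof (pow2_ge_0 x); lra).
  lra.
Qed.

Lemma exp_neg_sqr_half_le (x : R) : exp (- x ^ 2 / 2) <= exp (1 / 2) * exp (- Rabs x).
Proof.
  rewrite <- exp_plus; apply exp_le_compat.
  rewrite <- (pow2_abs x).
  assert (0 <= (Rabs x - 1) ^ 2) by apply pow2_ge_0.
  lra.
Qed.

Lemma gauss_E_truncation (f : R -> R) (M : R) :
  (forall x, continuous f x) -> (forall x, Rabs (f x) <= 1) ->
  Rabs (gauss_E f - RInt (fun x => f x * gauss_pdf x) (- M) M)
    <= 2 * (exp (1 / 2) * exp (- M)).
Proof.
  intros Hf Hf1.
  set (h := fun x => f x * exp (- x ^ 2 / 2) / sqrt (2 * PI)).
  assert (Hh : forall x, h x = f x * gauss_pdf x) by (intros; unfold h, gauss_pdf, Rdiv; ring).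
  assert (Hh_cont : forall x, continuous h x).
  { intros x; apply (continuous_ext (fun x => f x * gauss_pdf x)); [intros; auto |].
    apply (continuous_mult (K := R_AbsRing)); [apply Hf | apply continuous_gauss_pdf]. }
  assert (Hh_bound : forall x, Rabs (h x) <= exp (1 / 2) * exp (- Rabs x)).
  { intros x; rewrite Hh, Rabs_mult, (Rabs_pos_eq (gauss_pdf x)) by apply gauss_pdf_bounds.
    eapply Rle_trans; [| apply exp_neg_sqr_half_le].
    rewrite <- (Rmult_1_l (exp _)).
    apply Rmult_le_compat; [apply Rabs_pos | apply gauss_pdf_bounds | apply Hf1 |
                            apply gauss_pdf_bounds]. }
  destruct (is_RInt_gen_exp_tails h _ Hh_cont Hh_bound) as [y [Hy Htrunc]].
  replace (gauss_E f) with y.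
  2:{ symmetry; unfold gauss_E; fold h.
      exact (is_RInt_gen_unique (V := R_CompleteNormedModule) h y Hy). }
  rewrite <- (RInt_ext (V := R_CompleteNormedModule) h) by (intros; apply Hh).
  apply Htrunc.
Qed.

Lemma RInt_gauss_pdf_erf (t : R) : RInt gauss_pdf t (- t) = erf (- t / sqrt 2).
Proof.
  assert (Hs2 : 0 < sqrt 2) by (apply sqrt_lt_R0; lra).
  assert (HsPI : 0 < sqrt PI) by (apply sqrt_lt_R0; pose proof PI2_1; lra).
  assert (Hs2s2 : sqrt 2 * sqrt 2 = 2) by (apply sqrt_sqrt; lra).
  rewrite (RInt_even_symmetric gauss_pdf t continuous_gauss_pdf gauss_pdf_even).
  pose proof (RInt_comp_lin (V := R_CompleteNormedModule) gauss_pdf (sqrt 2) 0 0 (- t / sqrt 2)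
                (ex_RInt_of_continuous _ _ _ continuous_gauss_pdf)) as Hsub.
  replace (sqrt 2 * 0 + 0) with 0 in Hsub by ring.
  replace (sqrt 2 * (- t / sqrt 2) + 0) with (- t) in Hsub by (field; lra).
  rewrite <- Hsub.
  rewrite (RInt_ext (V := R_CompleteNormedModule) _ (fun y => scal (/ sqrt PI) (exp (- y ^ 2)))).
  - rewrite (RInt_scal (V := R_CompleteNormedModule)).
    + unfold erf, scal; simpl; unfold mult; simpl; field; lra.
    + apply ex_RInt_of_continuous; intros y.
      apply (ex_derive_continuous (fun y => exp (- y ^ 2))); auto_derive; exact I.
  - intros y _; unfold gauss_pdf.
    replace (- (sqrt 2 * y + 0) ^ 2 / 2) with (- y ^ 2)
      by (replace ((sqrt 2 * y + 0) ^ 2) with ((sqrt 2 * sqrt 2) * y ^ 2) by ring;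
          rewrite Hs2s2; field).
    change (sqrt 2 * (exp (- y ^ 2) / sqrt (2 * PI)) = / sqrt PI * exp (- y ^ 2)).
    rewrite sqrt_mult by (pose proof PI2_1; lra).
    field; lra.
Qed.

Lemma tanh_logistic (y : R) : tanh y = 1 - 2 / (exp (2 * y) + 1).
Proof.
  unfold tanh, sinh, cosh; rewrite exp_Ropp.
  replace (2 * y) with (y + y) by ring; rewrite exp_plus.
  pose proof (exp_pos y); field; nra.
Qed.

Lemma tanh_opp (y : R) : tanh (- y) = - tanh y.
Proof.
  unfold tanh, sinh, cosh; rewrite Ropp_involutive, (Rplus_comm (exp (- y))).
  pose proof (exp_pos y); pose proof (exp_pos (- y)); field; lra.
Qed.

Lemma continuous_tanh (y : R) : continuous tanh y.
Proof.
  apply (continuous_ext (fun y => 1 - 2 / (exp (2 * y) + 1)));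
    [intros; symmetry; apply tanh_logistic |].
  apply (ex_derive_continuous (fun y => 1 - 2 / (exp (2 * y) + 1))).
  auto_derive; pose proof (exp_pos (2 * y)); lra.
Qed.

Lemma abs_tanh_sub_1_le (y : R) : Rabs (tanh y - 1) <= 2 * exp (- (2 * y)).
Proof.
  rewrite tanh_logistic, exp_Ropp; pose proof (exp_pos (2 * y)).
  replace (1 - 2 / (exp (2 * y) + 1) - 1) with (- (2 / (exp (2 * y) + 1))) by ring.
  rewrite Rabs_Ropp, Rabs_pos_eq by (apply Rdiv_le_0_compat; lra).
  unfold Rdiv; apply Rmult_le_compat_l; [lra |].
  apply Rinv_le_contravar; lra.
Qed.

Lemma abs_tanh_add_1_le (y : R) : Rabs (tanh y + 1) <= 2 * exp (2 * y).
Proof.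
  rewrite <- (Ropp_involutive y) at 1; rewrite tanh_opp.
  replace (- tanh (- y) + 1) with (- (tanh (- y) - 1)) by ring.
  rewrite Rabs_Ropp; replace (2 * y) with (- (2 * - y)) by ring.
  apply abs_tanh_sub_1_le.
Qed.

Lemma abs_tanh_le_1 (y : R) : Rabs (tanh y) <= 1.
Proof.
  rewrite tanh_logistic; pose proof (exp_pos (2 * y)).
  assert (0 < 2 / (exp (2 * y) + 1) < 2).
  { split; [apply Rdiv_lt_0_compat; lra |].
    apply (Rmult_lt_reg_r (exp (2 * y) + 1)); [lra |].
    field_simplify; lra. }
  apply Rabs_le; lra.
Qed.

Lemma continuous_tanh_affine (k s x : R) : continuous (fun x => tanh (k * (x - s))) x.
Proof.
  apply (continuous_comp (fun x => k * (x - s)) tanh); [| apply continuous_tanh].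
  apply (ex_derive_continuous (fun x => k * (x - s))); auto_derive; exact I.
Qed.

Lemma gauss_E_tanh_error (k s t d M : R) :
  0 <= k -> 0 < d -> Rabs (s - t) <= d / 2 -> Rabs t + d <= M ->
  Rabs (gauss_E (fun x => tanh (k * (x - s))) - RInt gauss_pdf t (- t))
    <= 2 * (exp (1 / 2) * exp (- M)) + 4 * d + 2 * M * (2 * exp (- (k * d))).
Proof.
  intros Hk Hd Hs HM.
  set (g := fun x => tanh (k * (x - s))).
  assert (Hst : t - d / 2 <= s <= t + d / 2) by (apply Rabs_le_between'; exact Hs).
  pose proof (Rle_abs t); pose proof (Rle_abs (- t)) as Hmt; rewrite Rabs_Ropp in Hmt.
  pose proof (gauss_E_truncation g M (continuous_tanh_affine k s)
                (fun x => abs_tanh_le_1 _)) as Htrunc.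
  pose proof (abs_RInt_weighted_sign_approx g gauss_pdf t d (2 * exp (- (k * d))) M
                (continuous_tanh_affine k s) continuous_gauss_pdf
                (fun x => abs_tanh_le_1 _) gauss_pdf_weight Hd
                ltac:(pose proof (exp_pos (- (k * d))); lra) ltac:(lra) ltac:(lra))
    as Hsign.
  rewrite (RInt_even_sign_split gauss_pdf t M continuous_gauss_pdf gauss_pdf_even) in Hsign.
  assert (Hbound : Rabs (RInt (fun x => g x * gauss_pdf x) (- M) M - RInt gauss_pdf t (- t))
                     <= 4 * d + 2 * M * (2 * exp (- (k * d)))).
  { apply Hsign; intros x Hx; unfold g.
    - eapply Rle_trans; [apply abs_tanh_add_1_le |].
      apply Rmult_le_compat_l; [lra |]; apply exp_le_compat; nra.
    - eapply Rle_trans; [apply abs_tanh_sub_1_le |].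
      apply Rmult_le_compat_l; [lra |]; apply exp_le_compat; nra. }
  replace (gauss_E g - RInt gauss_pdf t (- t))
    with ((gauss_E g - RInt (fun x => g x * gauss_pdf x) (- M) M)
          + (RInt (fun x => g x * gauss_pdf x) (- M) M - RInt gauss_pdf t (- t))) by ring.
  eapply Rle_trans; [apply Rabs_triang | lra].
Qed.

Lemma gauss_E_tanh_step_limit (t : R) :
  filterlim (fun ks : R * R => gauss_E (fun x => tanh (fst ks * (x - snd ks))))
    (filter_prod (Rbar_locally p_infty) (locally t)) (locally (RInt gauss_pdf t (- t))).
Proof.
  apply filterlim_locally; intros [eps Heps]; simpl.
  (* Each of the three error terms of gauss_E_tanh_error is made at most eps / 4. *)
  pose (d := eps / 16).
  pose (M := Rmax (Rabs t + d) (1 / 2 - ln (eps / 8))).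
  assert (Hd : 0 < d) by (unfold d; lra).
  assert (HM1 : Rabs t + d <= M) by apply Rmax_l.
  assert (HM2 : 1 / 2 - ln (eps / 8) <= M) by apply Rmax_r.
  assert (HM : 0 < M) by (pose proof (Rabs_pos t); lra).
  apply (Filter_prod _ _ _ (fun k => - ln (eps / (16 * M)) / d <= k /\ 0 <= k)
                           (fun s => Rabs (s - t) < d / 2)).
  - exists (Rmax 0 (- ln (eps / (16 * M)) / d)); intros k Hk.
    split; eapply Rle_trans; try (left; exact Hk); [apply Rmax_r | apply Rmax_l].
  - exists (mkposreal (d / 2) ltac:(lra)); intros s Hs; exact Hs.
  - intros k s [Hk Hk0] Hs; simpl.
    change (Rabs (gauss_E (fun x => tanh (k * (x - s))) - RInt gauss_pdf t (- t)) < eps).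
    eapply Rle_lt_trans; [apply (gauss_E_tanh_error k s t d M); auto; lra |].
    assert (Htail : exp (1 / 2) * exp (- M) <= eps / 8).
    { rewrite <- exp_plus, <- (exp_ln (eps / 8)) by lra; apply exp_le_compat; lra. }
    assert (Hsteep : exp (- (k * d)) <= eps / (16 * M)).
    { rewrite <- (exp_ln (eps / (16 * M))) by (apply Rdiv_lt_0_compat; lra).
      apply exp_le_compat.
      apply (Rmult_le_compat_r d) in Hk; [| lra].
      unfold Rdiv in Hk; rewrite Rmult_assoc, Rinv_l, Rmult_1_r in Hk by lra; lra. }
    assert (2 * M * (2 * exp (- (k * d))) <= eps / 4).
    { apply (Rmult_le_compat_l (4 * M)) in Hsteep; [| lra].
      replace (4 * M * (eps / (16 * M))) with (eps / 4) in Hsteep by (field; lra); lra. }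
    unfold d in *; lra.
Qed.

Lemma is_lim_of_scaled_gap (f : R -> R) (l L : R) :
  is_lim (fun x => x * (l - f x)) p_infty L -> is_lim f p_infty l.
Proof.
  intros Hgap.
  assert (Hto0 : is_lim (fun x => l - f x) p_infty 0).
  { apply (is_lim_ext_loc (fun x => (x * (l - f x)) * / x)).
    - exists 0; intros x Hx; field; lra.
    - replace (Finite 0) with (Rbar_mult L 0) by (simpl; f_equal; ring).
      apply (is_lim_mult _ _ _ _ _ Hgap); [| exact I].
      apply (is_lim_inv (fun x => x) p_infty p_infty); [apply is_lim_id | discriminate]. }
  apply (is_lim_ext (fun x => l - (l - f x))); [intros; ring |].
  apply (is_lim_minus _ _ _ _ _ _ (is_lim_const l p_infty) Hto0).
  unfold is_Rbar_minus, is_Rbar_plus; simpl; rewrite Ropp_0, Rplus_0_r; reflexivity.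
Qed.

(* For even P, q^(P/2) q^(P/2-1) is the q^(P-1) of the paper. *)
Definition rs_slope (P : nat) (gamma q : R) : R :=
  sqrt (gamma * (INR P / 2) * (q ^ (P / 2) * q ^ (P / 2 - 1))).

Lemma rs_field_affine (P : nat) (gamma b m q x : R) :
  0 <= b -> rs_slope P gamma q <> 0 ->
  rs_field P gamma b m q (b * q ^ (P / 2)) x
  = (b * rs_slope P gamma q) * (x - - (INR P / 2 * m ^ (P - 1)) / rs_slope P gamma q).
Proof.
  intros Hb HC; unfold rs_field.
  replace (b * gamma * (INR P / 2) * (b * q ^ (P / 2)) * q ^ (P / 2 - 1))
    with ((b * b) * (gamma * (INR P / 2) * (q ^ (P / 2) * q ^ (P / 2 - 1)))) by ring.
  rewrite sqrt_mult_alt, sqrt_square by (apply Rle_0_sqr || exact Hb).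
  fold (rs_slope P gamma q); field; exact HC.
Qed.

Lemma is_lim_id_mult_pos (f : R -> R) (c : R) :
  0 < c -> is_lim f p_infty c -> is_lim (fun x => x * f x) p_infty p_infty.
Proof.
  intros Hc Hf.
  replace p_infty with (Rbar_mult p_infty c) at 2.
  - apply (is_lim_mult _ _ _ _ _ (is_lim_id p_infty) Hf); simpl; lra.
  - simpl; destruct (Rle_dec 0 c) as [Hc' |]; [destruct (Rle_lt_or_eq_dec 0 c Hc') |];
      auto; lra.
Qed.

Lemma is_lim_rs_slope (P : nat) (gamma : R) (q : R -> R) :
  0 < INR P -> 0 < gamma -> is_lim q p_infty 1 ->
  is_lim (fun b => rs_slope P gamma (q b)) p_infty (sqrt (gamma * (INR P / 2))).
Proof.
  intros HP Hgamma Hq.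
  replace (sqrt (gamma * (INR P / 2))) with (rs_slope P gamma 1)
    by (unfold rs_slope; rewrite !pow1, !Rmult_1_r; reflexivity).
  apply is_lim_comp_continuous; [exact Hq |].
  apply (ex_derive_continuous (rs_slope P gamma)); unfold rs_slope; auto_derive.
  rewrite !pow1; nra.
Qed.

Lemma rs_magnetization_limit (P : nat) (gamma : R) (m q p : R -> R) (m_inf : R) :
  (0 < P)%nat -> 0 < gamma ->
  (forall b, 0 < b -> m b = gauss_E (fun x => tanh (rs_field P gamma b (m b) (q b) (p b) x))) ->
  (forall b, 0 < b -> p b = b * q b ^ (P / 2)) ->
  is_lim m p_infty m_inf -> is_lim q p_infty 1 ->
  let t := - (INR P / 2 * m_inf ^ (P - 1)) / sqrt (gamma * (INR P / 2)) in
  m_inf = RInt gauss_pdf t (- t).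
Proof.
  intros HP Hgamma Hm Hp Hm_lim Hq_lim t.
  assert (HP' : 0 < INR P) by (apply lt_0_INR; exact HP).
  set (A := fun x => INR P / 2 * x ^ (P - 1)).
  set (C := sqrt (gamma * (INR P / 2))).
  assert (HC : 0 < C) by (apply sqrt_lt_R0; nra).
  assert (HA_lim : is_lim (fun b => A (m b)) p_infty (A m_inf)).
  { apply is_lim_comp_continuous; [exact Hm_lim |].
    apply (ex_derive_continuous A); unfold A; auto_derive; exact I. }
  pose proof (is_lim_rs_slope P gamma q HP' Hgamma Hq_lim) as HC_lim; fold C in HC_lim.
  assert (Hslope_pos : Rbar_locally p_infty (fun b => 0 < b /\ 0 < rs_slope P gamma (q b))).
  { apply filter_and; [exists 0; auto |].
    apply HC_lim; exists (mkposreal C HC); intros y Hy.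
    apply Rabs_lt_between' in Hy; simpl in Hy; lra. }
  pose proof (is_lim_id_mult_pos _ C HC HC_lim) as Hscale.
  assert (Hshift : is_lim (fun b => - A (m b) / rs_slope P gamma (q b)) p_infty t).
  { apply (is_lim_div _ _ _ _ _ (is_lim_opp _ _ _ HA_lim) HC_lim);
      simpl; try injection; lra. }
  assert (Hlim := filterlim_comp _ _ _ _ _ _ _ _ (filterlim_pair _ _ Hscale Hshift)
                    (gauss_E_tanh_step_limit t)).
  assert (Hm_lim' : is_lim m p_infty (RInt gauss_pdf t (- t))).
  { refine (filterlim_ext_loc _ _ _ Hlim).
    eapply filter_imp; [| exact Hslope_pos]; intros b [Hb HCb]; simpl.
    symmetry; rewrite (Hm b Hb) at 1; rewrite (Hp b Hb).
    f_equal; apply functional_extensionality; intros x.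
    rewrite rs_field_affine by lra; reflexivity. }
  apply is_lim_unique in Hm_lim, Hm_lim'.
  rewrite Hm_lim in Hm_lim'; injection Hm_lim'; auto.
Qed.

Lemma erf_argument_eq (p gamma a : R) :
  0 < p -> 0 < gamma ->
  - (- (p / 2 * a) / sqrt (gamma * (p / 2))) / sqrt 2 = 1 / 2 * sqrt (p / gamma) * a.
Proof.
  intros Hp Hgamma.
  assert (Hsp : 0 < sqrt p) by (apply sqrt_lt_R0; lra).
  assert (Hsg : 0 < sqrt gamma) by (apply sqrt_lt_R0; lra).
  assert (Hs2 : 0 < sqrt 2) by (apply sqrt_lt_R0; lra).
  rewrite sqrt_div_alt, !sqrt_mult_alt, sqrt_div_alt by lra.
  replace p with (sqrt p * sqrt p) at 1 by (apply sqrt_sqrt; lra).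
  field; lra.
Qed.

Theorem theorem5 (P : nat) (gamma : R)
  (m q p : R -> R) (m_inf : R) :
  Nat.Even P -> (4 <= P)%nat -> 0 < gamma ->
  (forall b, 0 < b ->
     m b = gauss_E (fun x => tanh (rs_field P gamma b (m b) (q b) (p b) x)) /\
     q b = gauss_E (fun x => (tanh (rs_field P gamma b (m b) (q b) (p b) x)) ^ 2) /\
     p b = b * q b ^ (P / 2)) ->
  is_lim m p_infty m_inf ->
  (exists L : R, is_lim (fun b => b * (1 - q b)) p_infty L) ->
  m_inf = erf (1 / 2 * sqrt (INR P / gamma) * m_inf ^ (P - 1)).
Proof.
  intros _ HP Hgamma Hrs Hm_lim [L Hgap].
  assert (Hq_lim : is_lim q p_infty 1) by exact (is_lim_of_scaled_gap q 1 L Hgap).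
  pose proof (rs_magnetization_limit P gamma m q p m_inf ltac:(lia) Hgamma
                (fun b Hb => proj1 (Hrs b Hb)) (fun b Hb => proj2 (proj2 (Hrs b Hb)))
                Hm_lim Hq_lim) as Hmag.
  rewrite Hmag at 1; rewrite RInt_gauss_pdf_erf, erf_argument_eq; auto.
  apply lt_0_INR; lia.
Qed.
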